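(* Let $\mathcal P$ be a conventional logic program. Then: (1) if $v$ is a three-valued stable model of $\mathcal P$, then $v$ is a pessimistic fixed model of $\mathcal P$, i.e. $\Psi'^{\mathcal F}_{\mathcal P}(v)=v$; (2) if $v$ is the well-founded semantics of $\mathcal P$, then $v=Fix^{\mathcal F}_{\mathcal U}$; (3) if $v$ is the Kripke-Kleene semantics of $\mathcal P$, then $v=Fix^{\mathcal U}_{\mathcal U}$.
   Context: $\mathcal{FOUR}=\{\mathcal F,\mathcal T,\mathcal U,\mathcal I\}$ is Belnap's bilattice: truth order $\mathcal F\le_t\mathcal U\le_t\mathcal T$, $\mathcal F\le_t\mathcal I\le_t\mathcal T$; knowledge order $\mathcal U\le_k\mathcal F\le_k\mathcal I$, $\mathcal U\le_k\mathcal T\le_k\mathcal I$; $\wedge,\vee$ are meet/join for $\le_t$, $\otimes,\oplus$ for $\le_k$ (with infinitary versions $\bigwedge,\bigvee,\bigotimes,\bigoplus$); negation $\neg\mathcal T=\mathcal F$, $\neg\mathcal F=\mathcal T$, $\neg\mathcal U=\mathcal U$, $\neg\mathcal I=\mathcal I$. A Fitting program over $\mathcal{FOUR}$: formulas are built from literals ($A$ or $\neg A$) and elements of $\mathcal{FOUR}$ using $\wedge,\vee,\otimes,\oplus,\exists,\forall$ (with built-in predicate $equal$); a clause is $P(x_1,\dots,x_n)\leftarrow\phi(x_1,\dots,x_n)$ with the body's free variables among $x_1,\dots,x_n$; a program is a finite set of clauses with no predicate letter heading more than one clause; Inst-$\mathcal P$ is its set of ground instances. A conventional logic program is such a program that does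 not involve $\otimes,\oplus,\forall,\mathcal U,\mathcal I$. Valuations are maps from ground atoms to $\mathcal{FOUR}$, ordered pointwise; they extend to closed formulas compositionally ($v(\beta)=\beta$, $v(\neg A)=\neg v(A)$, connectives pointwise, $\exists$ as $\bigvee$, $\forall$ as $\bigwedge$ over closed-term instances, $v(equal(s,t))=\mathcal T$ if $s=t$ else $\mathcal F$). The contrajoin $v\bigtriangleup w$ evaluates likewise but gives $A$ the value $v(A)$ and $\neg A$ the value $\neg w(A)$. For $\alpha\in\mathcal{FOUR}$: $\Psi_{\mathcal P}^{\alpha}(v,w)(A)=\alpha$ if $A$ heads no member of Inst-$\mathcal P$, and $=(v\bigtriangleup w)(B)$ if $A\leftarrow B\in$ Inst-$\mathcal P$. $\Psi'^{\mathcal F}_{\mathcal P}(v)$ is the $\le_t$-least fixpoint of $x\mapsto\Psi^{\mathcal F}_{\mathcal P}(x,v)$ and $\Psi'^{\mathcal U}_{\mathcal P}(v)$ is the $\le_k$-least fixpoint of $x\mapsto\Psi^{\mathcal U}_{\mathcal P}(x,v)$. A pessimistic fixed model is a fixpoint of $\Psi'^{\mathcal F}_{\mathcal P}$. $Fix^{\alpha}_{\mathcal U}$ is the $\le_k$-least fixpoint of $\Psi'^{\alpha}_{\mathcal P}$. Three-valued stable models (Przymusinski): for a valuation $v$ with values in $\{\mathcal F,\mathcal U,\mathcal T\}$, let $\mathcal P_{/v}$ be obtained from Inst-$\mathcal P$ by replacing each negative literal $\neg A$ in bodies by the value $\neg v(A)$; let $\Phi_{\mathcal P_{/v}}(u)(A)=\mathcal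 F$ if $A$ heads no rule of $\mathcal P_{/v}$, $\mathcal T$ if $A\leftarrow$ (empty body) is in $\mathcal P_{/v}$, and otherwise the join over rules $A\leftarrow B$ of $\mathcal P_{/v}$ of $u(B)$; $GL_{\mathcal P}(v)$ is the $\le_t$-least fixpoint of $\Phi_{\mathcal P_{/v}}$. $v$ is a three-valued stable model if $GL_{\mathcal P}(v)=v$; the well-founded semantics is the least three-valued stable model. Kripke-Kleene semantics (as defined in the paper): $\Phi_{\mathcal P}(v)(A)=\mathcal T$ if some rule of Inst-$\mathcal P$ with head $A$ has body value $\mathcal T$ under $v$; $=\mathcal F$ if there is a rule with head $A$ and every rule with head $A$ has body value $\mathcal F$ under $v$; $=\mathcal U$ otherwise. The Kripke-Kleene semantics is the $\le_k$-least fixpoint of $\Phi_{\mathcal P}$. *)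

From Stdlib Require Import List Arith Bool ClassicalEpsilon.
Import ListNotations.

Set Implicit Arguments.

(** * Belnap's bilattice FOUR *)

Inductive FOUR : Type := FF | TT | UU | II.

Definition le_t (x y : FOUR) : bool :=
  match x, y with
  | FF, _ => true
  | _, TT => true
  | UU, UU => true
  | II, II => true
  | _, _ => false
  end.

Definition le_k (x y : FOUR) : bool :=
  match x, y with
  | UU, _ => true
  | _, II => true
  | FF, FF => true
  | TT, TT => true
  | _, _ => false
  end.

Definition negF (x : FOUR) : FOUR :=
  match x with TT => FF | FF => TT | UU => UU | II => II end.

(** "evidence for truth" / "evidence for falsity" coordinates *)
Definition tv (x : FOUR) : bool := match x with TT | II => true | _ => false end.
Definition fv (x : FOUR) : bool := match x with FF | II => true | _ => false end.
Definition mk (t f : bool) : FOUR :=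
  match t, f with
  | true, false => TT | false, true => FF | false, false => UU | true, true => II
  end.

Definition andF   (x y : FOUR) : FOUR := mk (tv x && tv y) (fv x || fv y).
Definition orF    (x y : FOUR) : FOUR := mk (tv x || tv y) (fv x && fv y).
Definition otimesF (x y : FOUR) : FOUR := mk (tv x && tv y) (fv x && fv y).
Definition oplusF (x y : FOUR) : FOUR := mk (tv x || tv y) (fv x || fv y).

Definition bool_of (P : Prop) : bool :=
  if excluded_middle_informative P then true else false.

Definition bigor {I : Type} (g : I -> FOUR) : FOUR :=
  mk (bool_of (exists i, tv (g i) = true)) (bool_of (forall i, fv (g i) = true)).
Definition bigand {I : Type} (g : I -> FOUR) : FOUR :=
  mk (bool_of (forall i, tv (g i) = true)) (bool_of (exists i, fv (g i) = true)).

Lemma orF_lub : forall x y z,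
  le_t x (orF x y) = true /\ le_t y (orF x y) = true /\
  (le_t x z = true -> le_t y z = true -> le_t (orF x y) z = true).
Proof. destruct x, y, z; simpl; intuition discriminate. Qed.
Lemma andF_glb : forall x y z,
  le_t (andF x y) x = true /\ le_t (andF x y) y = true /\
  (le_t z x = true -> le_t z y = true -> le_t z (andF x y) = true).
Proof. destruct x, y, z; simpl; intuition discriminate. Qed.
Lemma oplusF_lub : forall x y z,
  le_k x (oplusF x y) = true /\ le_k y (oplusF x y) = true /\
  (le_k x z = true -> le_k y z = true -> le_k (oplusF x y) z = true).
Proof. destruct x, y, z; simpl; intuition discriminate. Qed.
Lemma otimesF_glb : forall x y z,
  le_k (otimesF x y) x = true /\ le_k (otimesF x y) y = true /\
  (le_k z x = true -> le_k z y = true -> le_k z (otimesF x y) = true).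
Proof. destruct x, y, z; simpl; intuition discriminate. Qed.

Record Sig : Type := {
  fsym : Type; farity : fsym -> nat;   (* function symbols (constants: arity 0) *)
  psym : Type; parity : psym -> nat
}.

Section Syntax.
Variable S : Sig.

Inductive term : Type :=
| Var (n : nat)
| Fn (f : fsym S) (ts : list term).

Fixpoint gok (t : term) : bool :=
  match t with
  | Var _ => false
  | Fn f ts => Nat.eqb (length ts) (farity S f) && forallb gok ts
  end.
Definition HU : Type := { t : term | gok t = true }.

Definition atom_ok (p : psym S) (ts : list term) : bool :=
  Nat.eqb (length ts) (parity S p) && forallb gok ts.
Definition GAtom : Type := { a : psym S * list term | atom_ok (fst a) (snd a) = true }.

Inductive formula : Type :=
| FConst (b : FOUR)
| FPos (p : psym S) (ts : list term)
| FNeg (p : psym S) (ts : list term)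
| FEqual (s t : term)
| FAnd (a b : formula) | FOr (a b : formula)
| FOtimes (a b : formula) | FOplus (a b : formula)
| FEx (x : nat) (a : formula) | FAll (x : nat) (a : formula).

Fixpoint wf_term (t : term) : bool :=
  match t with
  | Var _ => true
  | Fn f ts => Nat.eqb (length ts) (farity S f) && forallb wf_term ts
  end.

Fixpoint wf_formula (a : formula) : bool :=
  match a with
  | FConst _ => true
  | FPos p ts | FNeg p ts => Nat.eqb (length ts) (parity S p) && forallb wf_term ts
  | FEqual s t => wf_term s && wf_term t
  | FAnd a b | FOr a b | FOtimes a b | FOplus a b => wf_formula a && wf_formula b
  | FEx _ a | FAll _ a => wf_formula a
  end.

Fixpoint tvars (t : term) : list nat :=
  match t with Var n => [n] | Fn _ ts => flat_map tvars ts end.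

Fixpoint fvars (a : formula) : list nat :=
  match a with
  | FConst _ => []
  | FPos _ ts | FNeg _ ts => flat_map tvars ts
  | FEqual s t => tvars s ++ tvars t
  | FAnd a b | FOr a b | FOtimes a b | FOplus a b => fvars a ++ fvars b
  | FEx x a | FAll x a => filter (fun n => negb (Nat.eqb n x)) (fvars a)
  end.

Fixpoint conventional_formula (a : formula) : bool :=
  match a with
  | FConst UU | FConst II => false
  | FConst _ | FPos _ _ | FNeg _ _ | FEqual _ _ => true
  | FAnd a b | FOr a b => conventional_formula a && conventional_formula b
  | FOtimes _ _ | FOplus _ _ | FAll _ _ => false
  | FEx _ a => conventional_formula a
  end.

Record clause : Type := { chead : psym S; cvars : list nat; cbody : formula }.
Definition program : Type := list clause.

Definition is_program (P : program) : Prop :=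
  (forall c, In c P ->
     NoDup (cvars c) /\ length (cvars c) = parity S (chead c) /\
     wf_formula (cbody c) = true /\
     (forall n, In n (fvars (cbody c)) -> In n (cvars c)))
  /\ NoDup (map chead P).

Definition conventional_program (P : program) : Prop :=
  is_program P /\ forall c, In c P -> conventional_formula (cbody c) = true.

(** closed formulas; an existential/universal closed formula is represented by
    the family of its closed-term instances *)
Inductive gform : Type :=
| GConst (b : FOUR)
| GPos (A : GAtom) | GNeg (A : GAtom)
| GEqual (s t : HU)
| GAnd (a b : gform) | GOr (a b : gform)
| GOtimes (a b : gform) | GOplus (a b : gform)
| GEx (g : HU -> gform) | GAll (g : HU -> gform).

Fixpoint tsub (rho : nat -> term) (t : term) : term :=
  match t with Var n => rho n | Fn f ts => Fn f (map (tsub rho) ts) end.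

Definition upd (rho : nat -> term) (x : nat) (t : term) : nat -> term :=
  fun n => if Nat.eqb n x then t else rho n.

Fixpoint env_of (xs : list nat) (ts : list term) : nat -> term :=
  match xs, ts with
  | x :: xs', t :: ts' => upd (env_of xs' ts') x t
  | _, _ => Var
  end.

Definition mkatom (p : psym S) (ts : list term) : option GAtom :=
  match atom_ok p ts as b return atom_ok p ts = b -> option GAtom with
  | true => fun H => Some (exist _ (p, ts) H)
  | false => fun _ => None
  end eq_refl.

Definition mkhu (t : term) : option HU :=
  match gok t as b return gok t = b -> option HU with
  | true => fun H => Some (exist _ t H)
  | false => fun _ => None
  end eq_refl.

(** instance of a formula under a substitution of closed terms; the [None]
    branches never occur for well-formed clause bodies instantiated by closed
    terms for all their free variables *)
Fixpoint ground (rho : nat -> term) (a : formula) : gform :=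
  match a with
  | FConst b => GConst b
  | FPos p ts => match mkatom p (map (tsub rho) ts) with
                 | Some A => GPos A | None => GConst FF end
  | FNeg p ts => match mkatom p (map (tsub rho) ts) with
                 | Some A => GNeg A | None => GConst FF end
  | FEqual s t => match mkhu (tsub rho s), mkhu (tsub rho t) with
                  | Some s', Some t' => GEqual s' t'
                  | _, _ => GConst FF end
  | FAnd a b => GAnd (ground rho a) (ground rho b)
  | FOr a b => GOr (ground rho a) (ground rho b)
  | FOtimes a b => GOtimes (ground rho a) (ground rho b)
  | FOplus a b => GOplus (ground rho a) (ground rho b)
  | FEx x a => GEx (fun c => ground (upd rho x (proj1_sig c)) a)
  | FAll x a => GAll (fun c => ground (upd rho x (proj1_sig c)) a)
  end.

(** [inst P A B] : the ground clause  A <- B  belongs to Inst-P *)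
Definition inst (P : program) (A : GAtom) (B : gform) : Prop :=
  exists c, In c P /\ chead c = fst (proj1_sig A) /\
            B = ground (env_of (cvars c) (snd (proj1_sig A))) (cbody c).

Definition Val : Type := GAtom -> FOUR.
Definition le_t_val (v w : Val) : Prop := forall A, le_t (v A) (w A) = true.
Definition le_k_val (v w : Val) : Prop := forall A, le_k (v A) (w A) = true.

(** contrajoin evaluation  (v /\ w)(B) ; the ordinary valuation is [geval v v] *)
Fixpoint geval (v w : Val) (g : gform) : FOUR :=
  match g with
  | GConst b => b
  | GPos A => v A
  | GNeg A => negF (w A)
  | GEqual s t => if bool_of (s = t) then TT else FF
  | GAnd a b => andF (geval v w a) (geval v w b)
  | GOr a b => orF (geval v w a) (geval v w b)
  | GOtimes a b => otimesF (geval v w a) (geval v w b)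
  | GOplus a b => oplusF (geval v w a) (geval v w b)
  | GEx g => bigor (fun c => geval v w (g c))
  | GAll g => bigand (fun c => geval v w (g c))
  end.

Definition is_least_fix {X : Type} (le : X -> X -> Prop) (f : X -> X) (x : X) : Prop :=
  f x = x /\ forall y, f y = y -> le x y.

Definition is_least_fix_in {X : Type} (D : X -> Prop) (le : X -> X -> Prop)
  (f : X -> X) (x : X) : Prop :=
  D x /\ f x = x /\ forall y, D y -> f y = y -> le x y.

Definition Psi (alpha : FOUR) (P : program) (v w : Val) : Val :=
  fun A =>
    match excluded_middle_informative (exists B, inst P A B) with
    | left H => geval v w (proj1_sig (constructive_indefinite_description _ H))
    | right _ => alpha
    end.

Definition val_inh : inhabited Val := inhabits (fun _ => FF).

Definition PsiF' (P : program) (v : Val) : Val :=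
  epsilon val_inh (is_least_fix le_t_val (fun x => Psi FF P x v)).

Definition PsiU' (P : program) (v : Val) : Val :=
  epsilon val_inh (is_least_fix le_k_val (fun x => Psi UU P x v)).

Definition pessimistic_fixed_model (P : program) (v : Val) : Prop := PsiF' P v = v.

Definition Fix_F_U (P : program) : Val := epsilon val_inh (is_least_fix le_k_val (PsiF' P)).
Definition Fix_U_U (P : program) : Val := epsilon val_inh (is_least_fix le_k_val (PsiU' P)).

(** * Three-valued stable models (Przymusinski) *)

Definition three_valued (v : Val) : Prop := forall A, v A <> II.

Fixpoint reduct (v : Val) (g : gform) : gform :=
  match g with
  | GConst b => GConst b
  | GPos A => GPos A
  | GNeg A => GConst (negF (v A))
  | GEqual s t => GEqual s t
  | GAnd a b => GAnd (reduct v a) (reduct v b)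
  | GOr a b => GOr (reduct v a) (reduct v b)
  | GOtimes a b => GOtimes (reduct v a) (reduct v b)
  | GOplus a b => GOplus (reduct v a) (reduct v b)
  | GEx g => GEx (fun c => reduct v (g c))
  | GAll g => GAll (fun c => reduct v (g c))
  end.

Definition Phi_red (P : program) (v : Val) (u : Val) : Val :=
  fun A =>
    if bool_of (exists B, inst P A B)
    then bigor (fun B : { B : gform | inst P A B } => geval u u (reduct v (proj1_sig B)))
    else FF.

Definition three_valued_stable (P : program) (v : Val) : Prop :=
  is_least_fix_in three_valued le_t_val (Phi_red P v) v.

Definition well_founded (P : program) (v : Val) : Prop :=
  three_valued_stable P v /\ forall w, three_valued_stable P w -> le_k_val v w.

Definition Phi_KK (P : program) (v : Val) : Val :=
  fun A =>
    if bool_of (exists B, inst P A B /\ geval v v B = TT) then TT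
    else if bool_of ((exists B, inst P A B) /\
                     forall B, inst P A B -> geval v v B = FF) then FF
    else UU.

Definition kripke_kleene (P : program) (v : Val) : Prop :=
  is_least_fix le_k_val (Phi_KK P) v.

End Syntax.

(** Read FOUR through its two coordinates, evidence for truth [tv] and evidence
    for falsity [fv]: ≤t is the order (↑, ↓) and ≤k the order (↑, ↑), and [tv]
    of a body under the contrajoin of x and w depends monotonically on [tv] of x
    and [fv] of w only (dually for [fv]).

    Since no predicate heads two clauses, Ψ^α_P(x, w)(A) is the value of the
    unique body of A, so the reduct operator Φ_{P/v}(u) is Ψ^F_P(u, v): GL_P(v)
    and Ψ'^F_P(v) are least fixpoints of the same map.  The restriction of GL to
    three-valued valuations is harmless because conventional bodies (no ⊕, no I)
    take consistent valuations to consistent values, which makes Ψ'^F_P(v)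
    three-valued whenever v is.  This gives (1).  Ψ'^F_P is ≤k-monotone, and a
    ≤k-lower bound of a three-valued valuation is three-valued, so the ≤k-least
    fixpoint of Ψ'^F_P lies below the well-founded model and is itself a
    three-valued stable model: (2).  Finally Φ_P(x) = Ψ^U_P(x, x) on consistent
    x, so the Kripke-Kleene model is the ≤k-least fixpoint of the diagonal of
    Ψ^U_P, and for any operator monotone in both arguments that is also the
    least fixpoint of x ↦ lfp Ψ^U_P(·, x): (3). *)

From Stdlib Require Import List Bool ClassicalEpsilon FunctionalExtensionality.
Set Implicit Arguments.

Section LeastFixpoints.
Variables (X : Type) (le : X -> X -> Prop).
Hypothesis le_refl : forall x, le x x.
Hypothesis le_antisym : forall x y, le x y -> le y x -> x = y.
Hypothesis le_trans : forall x y z, le x y -> le y z -> le x z.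

Definition is_least_prefix (f : X -> X) (x : X) : Prop :=
  f x = x /\ forall y, le (f y) y -> le x y.

Lemma knaster_tarski (inf : (X -> Prop) -> X) (f : X -> X) :
  (forall (Q : X -> Prop) y, Q y -> le (inf Q) y) ->
  (forall (Q : X -> Prop) z, (forall y, Q y -> le z y) -> le z (inf Q)) ->
  (forall x y, le x y -> le (f x) (f y)) ->
  exists K, is_least_prefix f K.
Proof.
  intros inf_lb inf_glb f_mono.
  set (K := inf (fun y => le (f y) y)).
  assert (fK_le_K : le (f K) K).
  { apply inf_glb; intros y Hy. apply le_trans with (f y); [apply f_mono, inf_lb|]; exact Hy. }
  exists K; split.
  - apply le_antisym; [exact fK_le_K |]. apply inf_lb, f_mono, fK_le_K.
  - intros y Hy; apply inf_lb, Hy.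
Qed.

Lemma least_prefix_least_fix f K : is_least_prefix f K -> is_least_fix le f K.
Proof. intros [HK K_least]; split; [exact HK |]. intros y Hy; apply K_least; rewrite Hy; apply le_refl. Qed.

Lemma epsilon_least_fix (inh : inhabited X) f K :
  is_least_fix le f K -> epsilon inh (is_least_fix le f) = K.
Proof.
  intros HK. destruct (epsilon_spec inh (is_least_fix le f) (ex_intro _ K HK)) as [HE E_least].
  destruct HK as [HK K_least]. apply le_antisym; auto.
Qed.

Lemma epsilon_least_prefix (inh : inhabited X) f :
  (exists K, is_least_prefix f K) -> is_least_prefix f (epsilon inh (is_least_fix le f)).
Proof.
  intros [K HK]. rewrite (epsilon_least_fix inh (least_prefix_least_fix HK)). exact HK.
Qed.

Lemma least_prefix_diag_least_fix (f : X -> X -> X) (g : X -> X) K :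
  (forall x x' w w', le x x' -> le w w' -> le (f x w) (f x' w')) ->
  (forall w, is_least_prefix (fun x => f x w) (g w)) ->
  is_least_prefix (fun x => f x x) K ->
  is_least_fix le g K.
Proof.
  intros f_mono g_least [HK K_least].
  assert (gK_le_K : le (g K) K) by (apply (proj2 (g_least K)); rewrite HK; apply le_refl).
  split.
  - apply le_antisym; [exact gK_le_K |]. apply K_least.
    destruct (g_least K) as [HgK _]; cbv beta in HgK.
    apply le_trans with (f (g K) K); [apply f_mono; auto | rewrite HgK; apply le_refl].
  - intros y Hy. apply K_least.
    destruct (g_least y) as [Hgy _]; cbv beta in Hgy. rewrite Hy in Hgy. rewrite Hgy; apply le_refl.
Qed.

End LeastFixpoints.

Lemma bool_of_iff (Q : Prop) : bool_of Q = true <-> Q.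
Proof. unfold bool_of; destruct excluded_middle_informative; split; intuition discriminate. Qed.

Lemma bool_of_true (Q : Prop) : Q -> bool_of Q = true.
Proof. apply bool_of_iff. Qed.

Lemma bool_of_false (Q : Prop) : ~ Q -> bool_of Q = false.
Proof. unfold bool_of; destruct excluded_middle_informative; tauto. Qed.

Lemma tv_mk t f : tv (mk t f) = t.
Proof. destruct t, f; reflexivity. Qed.

Lemma fv_mk t f : fv (mk t f) = f.
Proof. destruct t, f; reflexivity. Qed.

Lemma tv_negF x : tv (negF x) = fv x.
Proof. destruct x; reflexivity. Qed.

Lemma fv_negF x : fv (negF x) = tv x.
Proof. destruct x; reflexivity. Qed.

Lemma FOUR_coords_inj x y : tv x = tv y -> fv x = fv y -> x = y.
Proof. destruct x, y; simpl; congruence. Qed.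

Lemma le_t_coords x y :
  le_t x y = true <-> (tv x = true -> tv y = true) /\ (fv y = true -> fv x = true).
Proof. destruct x, y; simpl; intuition discriminate. Qed.

Lemma le_k_coords x y :
  le_k x y = true <-> (tv x = true -> tv y = true) /\ (fv x = true -> fv y = true).
Proof. destruct x, y; simpl; intuition discriminate. Qed.

Lemma neq_II_coords x : x <> II <-> (tv x = true -> fv x = true -> False).
Proof. destruct x; simpl; intuition discriminate. Qed.

Section ValuationOrders.
Variable S : Sig.
Implicit Types (x y z : Val S) (Q : Val S -> Prop).

Lemma le_t_val_refl x : le_t_val x x.
Proof. intros A; apply le_t_coords; tauto. Qed.

Lemma le_k_val_refl x : le_k_val x x.
Proof. intros A; apply le_k_coords; tauto. Qed.

Lemma le_t_val_trans x y z : le_t_val x y -> le_t_val y z -> le_t_val x z.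
Proof. intros Hxy Hyz A; specialize (Hxy A); specialize (Hyz A); rewrite le_t_coords in *; tauto. Qed.

Lemma le_k_val_trans x y z : le_k_val x y -> le_k_val y z -> le_k_val x z.
Proof. intros Hxy Hyz A; specialize (Hxy A); specialize (Hyz A); rewrite le_k_coords in *; tauto. Qed.

Lemma le_t_val_antisym x y : le_t_val x y -> le_t_val y x -> x = y.
Proof.
  intros Hxy Hyx; apply functional_extensionality; intros A.
  specialize (Hxy A); specialize (Hyx A); rewrite le_t_coords in *.
  apply FOUR_coords_inj; apply eq_true_iff_eq; tauto.
Qed.

Lemma le_k_val_antisym x y : le_k_val x y -> le_k_val y x -> x = y.
Proof.
  intros Hxy Hyx; apply functional_extensionality; intros A.
  specialize (Hxy A); specialize (Hyx A); rewrite le_k_coords in *.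
  apply FOUR_coords_inj; apply eq_true_iff_eq; tauto.
Qed.

Definition inf_t Q : Val S := fun A =>
  mk (bool_of (forall y, Q y -> tv (y A) = true)) (bool_of (exists y, Q y /\ fv (y A) = true)).

Definition inf_k Q : Val S := fun A =>
  mk (bool_of (forall y, Q y -> tv (y A) = true)) (bool_of (forall y, Q y -> fv (y A) = true)).

Lemma inf_t_lb Q y : Q y -> le_t_val (inf_t Q) y.
Proof. intros Hy A; unfold inf_t; rewrite le_t_coords, tv_mk, fv_mk, !bool_of_iff; eauto. Qed.

Lemma inf_k_lb Q y : Q y -> le_k_val (inf_k Q) y.
Proof. intros Hy A; unfold inf_k; rewrite le_k_coords, tv_mk, fv_mk, !bool_of_iff; eauto. Qed.

Lemma inf_t_glb Q z : (forall y, Q y -> le_t_val z y) -> le_t_val z (inf_t Q).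
Proof.
  intros Hz A; unfold inf_t; rewrite le_t_coords, tv_mk, fv_mk, !bool_of_iff.
  split; [intros Ht y Hy | intros [y [Hy Hf]]];
    specialize (Hz y Hy A); rewrite le_t_coords in Hz; tauto.
Qed.

Lemma inf_k_glb Q z : (forall y, Q y -> le_k_val z y) -> le_k_val z (inf_k Q).
Proof.
  intros Hz A; unfold inf_k; rewrite le_k_coords, tv_mk, fv_mk, !bool_of_iff.
  split; intros Hzc y Hy; specialize (Hz y Hy A); rewrite le_k_coords in Hz; tauto.
Qed.

Lemma le_t_val_least_prefix (f : Val S -> Val S) :
  (forall x y, le_t_val x y -> le_t_val (f x) (f y)) -> exists K, is_least_prefix (@le_t_val S) f K.
Proof. apply knaster_tarski with inf_t; eauto using le_t_val_antisym, le_t_val_trans, inf_t_lb, inf_t_glb. Qed.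

Lemma le_k_val_least_prefix (f : Val S -> Val S) :
  (forall x y, le_k_val x y -> le_k_val (f x) (f y)) -> exists K, is_least_prefix (@le_k_val S) f K.
Proof. apply knaster_tarski with inf_k; eauto using le_k_val_antisym, le_k_val_trans, inf_k_lb, inf_k_glb. Qed.

Lemma three_valued_le_k x y : le_k_val x y -> three_valued y -> three_valued x.
Proof.
  intros Hxy Hy A; specialize (Hxy A); specialize (Hy A).
  rewrite le_k_coords in Hxy; rewrite neq_II_coords in *; tauto.
Qed.

End ValuationOrders.

Section Evaluation.
Variable S : Sig.
Implicit Types (x w : Val S) (g : gform S).

Lemma geval_tv_mono x x' w w' g :
  (forall A, tv (x A) = true -> tv (x' A) = true) ->
  (forall A, fv (w A) = true -> fv (w' A) = true) ->
  tv (geval x w g) = true -> tv (geval x' w' g) = true.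
Proof.
  intros Hx Hw; induction g; simpl; auto;
    unfold andF, orF, otimesF, oplusF, bigor, bigand;
    rewrite ?tv_negF, ?tv_mk, ?andb_true_iff, ?orb_true_iff, ?bool_of_iff; try tauto.
  - apply Hw.
  - intros [c Hc]; eauto.
  - intros Hc c; eauto.
Qed.

Lemma geval_fv_mono x x' w w' g :
  (forall A, fv (x A) = true -> fv (x' A) = true) ->
  (forall A, tv (w A) = true -> tv (w' A) = true) ->
  fv (geval x w g) = true -> fv (geval x' w' g) = true.
Proof.
  intros Hx Hw; induction g; simpl; auto;
    unfold andF, orF, otimesF, oplusF, bigor, bigand;
    rewrite ?fv_negF, ?fv_mk, ?andb_true_iff, ?orb_true_iff, ?bool_of_iff; try tauto.
  - apply Hw.
  - intros Hc c; eauto.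
  - intros [c Hc]; eauto.
Qed.

Lemma geval_le_t x x' w g : le_t_val x x' -> le_t (geval x w g) (geval x' w g) = true.
Proof.
  intros Hxx'; rewrite le_t_coords; split;
    [apply geval_tv_mono | apply geval_fv_mono]; auto;
    intros A; specialize (Hxx' A); rewrite le_t_coords in Hxx'; tauto.
Qed.

Lemma geval_le_k x x' w w' g :
  le_k_val x x' -> le_k_val w w' -> le_k (geval x w g) (geval x' w' g) = true.
Proof.
  intros Hxx' Hww'; rewrite le_k_coords; split;
    [apply geval_tv_mono | apply geval_fv_mono];
    intros A; [specialize (Hxx' A) | specialize (Hww' A) | specialize (Hxx' A) | specialize (Hww' A)];
    rewrite le_k_coords in *; tauto.
Qed.

Fixpoint consistent_gform g : Prop :=
  match g with
  | GConst _ b => b <> II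
  | GOplus _ _ => False
  | GAnd a b | GOr a b | GOtimes a b => consistent_gform a /\ consistent_gform b
  | GEx g | GAll g => forall c, consistent_gform (g c)
  | GPos _ | GNeg _ | GEqual _ _ => True
  end.

Lemma geval_neq_II {x w : Val S} {g : gform S} :
  consistent_gform g -> three_valued x -> three_valued w -> geval x w g <> II.
Proof.
  intros Hg Hx Hw; induction g; simpl in *; rewrite ?neq_II_coords in *;
    unfold andF, orF, otimesF, oplusF, bigor, bigand;
    rewrite ?tv_negF, ?fv_negF, ?tv_mk, ?fv_mk, ?andb_true_iff, ?orb_true_iff, ?bool_of_iff.
  all: try (intros; intuition eauto; fail).
  - exact (proj1 (neq_II_coords _) (Hx A)).
  - intros Hf Ht; exact (proj1 (neq_II_coords _) (Hw A) Ht Hf).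
  - destruct (bool_of (s = t)); discriminate.
  - intros [c Hc] Hf; exact (proj1 (neq_II_coords _) (H c (Hg c)) Hc (Hf c)).
  - intros Ht [c Hc]; exact (proj1 (neq_II_coords _) (H c (Hg c)) (Ht c) Hc).
Qed.

Lemma ground_consistent rho (a : formula S) :
  conventional_formula a = true -> consistent_gform (ground rho a).
Proof.
  revert rho; induction a; intros rho Ha; simpl in *; try discriminate.
  - destruct b; easy.
  - destruct (mkatom p (map (tsub rho) ts)); easy.
  - destruct (mkatom p (map (tsub rho) ts)); easy.
  - destruct (mkhu (tsub rho s)), (mkhu (tsub rho t)); easy.
  - apply andb_true_iff in Ha as [Ha1 Ha2]; split; auto.
  - apply andb_true_iff in Ha as [Ha1 Ha2]; split; auto.
  - intros c; apply IHa, Ha.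
Qed.

Lemma geval_reduct (u v : Val S) g : geval u u (reduct v g) = geval u v g.
Proof. induction g; simpl; try congruence; f_equal; apply functional_extensionality; auto. Qed.

End Evaluation.

Lemma NoDup_map_inj {A B : Type} {f : A -> B} {l : list A} {a b : A} :
  NoDup (map f l) -> In a l -> In b l -> f a = f b -> a = b.
Proof.
  induction l as [|c l IH]; simpl; intros Hnd Ha Hb Hab; [contradiction |].
  inversion Hnd as [|? ? Hc Hnd']; subst.
  destruct Ha as [->|Ha], Hb as [->|Hb]; auto; exfalso; apply Hc.
  - rewrite Hab; apply in_map, Hb.
  - rewrite <- Hab; apply in_map, Ha.
Qed.

Section Programs.
Variable S : Sig.
Implicit Types (P : program S) (x w : Val S).

Lemma inst_unique P A B B' : is_program P -> inst P A B -> inst P A B' -> B = B'.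
Proof.
  intros [_ Hnd] (c & Hc & Hh & ->) (c' & Hc' & Hh' & ->).
  assert (c = c') as -> by (apply (NoDup_map_inj Hnd Hc Hc'); congruence).
  reflexivity.
Qed.

Lemma inst_consistent P A B : conventional_program P -> inst P A B -> consistent_gform B.
Proof. intros [_ Hconv] (c & Hc & _ & ->); apply ground_consistent, Hconv, Hc. Qed.

Lemma Psi_cases alpha P A :
  (exists B, inst P A B /\ forall x w, Psi alpha P x w A = geval x w B) \/
  ((~ exists B, inst P A B) /\ forall x w, Psi alpha P x w A = alpha).
Proof.
  unfold Psi; destruct excluded_middle_informative as [H|H]; [left | right; auto].
  exists (proj1_sig (constructive_indefinite_description _ H)); split; auto.
  apply proj2_sig.
Qed.

Lemma Psi_inst alpha P A B x w :
  is_program P -> inst P A B -> Psi alpha P x w A = geval x w B.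
Proof.
  intros HP HB; destruct (Psi_cases alpha P A) as [[B' [HB' E]]|[HN _]].
  - rewrite E, (inst_unique HP HB' HB); reflexivity.
  - exfalso; eauto.
Qed.

Lemma Psi_le_t_mono alpha P x x' w :
  le_t_val x x' -> le_t_val (Psi alpha P x w) (Psi alpha P x' w).
Proof.
  intros Hxx' A; destruct (Psi_cases alpha P A) as [[B [_ E]]|[_ E]]; rewrite !E.
  - apply geval_le_t, Hxx'.
  - apply le_t_coords; tauto.
Qed.

Lemma Psi_le_k_mono alpha P x x' w w' :
  le_k_val x x' -> le_k_val w w' -> le_k_val (Psi alpha P x w) (Psi alpha P x' w').
Proof.
  intros Hxx' Hww' A; destruct (Psi_cases alpha P A) as [[B [_ E]]|[_ E]]; rewrite !E.
  - apply geval_le_k; assumption.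
  - apply le_k_coords; tauto.
Qed.

Lemma bigor_const (I : Type) (g : I -> FOUR) a (i0 : I) : (forall i, g i = a) -> bigor g = a.
Proof.
  intros Hg; unfold bigor; apply FOUR_coords_inj; rewrite ?tv_mk, ?fv_mk;
    apply eq_true_iff_eq; rewrite bool_of_iff.
  - split; [intros [i Hi]; rewrite Hg in Hi; exact Hi | intros Ha; exists i0; rewrite Hg; exact Ha].
  - split; [intros Hi; rewrite <- (Hg i0); apply Hi | intros Ha i; rewrite Hg; exact Ha].
Qed.

Lemma Phi_red_Psi P v : is_program P -> Phi_red P v = fun u => Psi FF P u v.
Proof.
  intros HP; apply functional_extensionality; intros u; apply functional_extensionality; intros A.
  unfold Phi_red; destruct (classic (exists B, inst P A B)) as [[B HB]|HN].
  - rewrite bool_of_true by eauto. rewrite (Psi_inst FF u v HP HB).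
    apply bigor_const; [exact (exist _ B HB) |].
    intros [B' HB']; simpl. rewrite geval_reduct, (inst_unique HP HB' HB); reflexivity.
  - rewrite bool_of_false by exact HN.
    destruct (Psi_cases FF P A) as [[B [HB _]]|[_ E]]; [exfalso; eauto | rewrite E; reflexivity].
Qed.

Lemma Phi_KK_three_valued P x : three_valued (Phi_KK P x).
Proof. intros A; unfold Phi_KK; destruct (bool_of _); [| destruct (bool_of _)]; discriminate. Qed.

Lemma Phi_KK_Psi P x : conventional_program P -> three_valued x -> Phi_KK P x = Psi UU P x x.
Proof.
  intros Hconv Hx; pose proof (proj1 Hconv) as HP.
  apply functional_extensionality; intros A; unfold Phi_KK.
  destruct (classic (exists B, inst P A B)) as [[B HB]|HN].
  - rewrite (Psi_inst UU x x HP HB).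
    assert (B_unique : forall B', inst P A B' -> B' = B) by (intros; eapply inst_unique; eauto).
    assert (B_cons := geval_neq_II (inst_consistent Hconv HB) Hx Hx).
    destruct (geval x x B) eqn:E; [| | | contradiction].
    + rewrite bool_of_false, bool_of_true; auto.
      * split; [eauto | intros B' HB'; rewrite (B_unique _ HB'); exact E].
      * intros [B' [HB' E']]; rewrite (B_unique _ HB'), E in E'; discriminate.
    + rewrite bool_of_true; eauto.
    + rewrite !bool_of_false; auto.
      * intros [_ HF]; rewrite (HF B HB) in E; discriminate.
      * intros [B' [HB' E']]; rewrite (B_unique _ HB'), E in E'; discriminate.
  - rewrite !bool_of_false by firstorder.
    destruct (Psi_cases UU P A) as [[B [HB _]]|[_ E]]; [exfalso; eauto | rewrite E; reflexivity].
Qed.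

End Programs.

Section FixedModels.
Variable S : Sig.
Implicit Types (P : program S) (v x : Val S).

Lemma PsiF'_least_prefix P v : is_least_prefix (@le_t_val S) (fun x => Psi FF P x v) (PsiF' P v).
Proof.
  apply epsilon_least_prefix; [apply le_t_val_refl | apply le_t_val_antisym |].
  apply le_t_val_least_prefix; intros; apply Psi_le_t_mono; assumption.
Qed.

Lemma PsiU'_least_prefix P v : is_least_prefix (@le_k_val S) (fun x => Psi UU P x v) (PsiU' P v).
Proof.
  apply epsilon_least_prefix; [apply le_k_val_refl | apply le_k_val_antisym |].
  apply le_k_val_least_prefix; intros; apply Psi_le_k_mono; auto using le_k_val_refl.
Qed.

Lemma PsiF'_three_valued P v : conventional_program P -> three_valued v -> three_valued (PsiF' P v).
Proof.
  intros Hconv Hv; destruct (PsiF'_least_prefix P v) as [Lfix L_least].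
  set (L := PsiF' P v) in *.
  (* [fv] of a body does not look at [tv] of its first argument, so [L] may be
     compared with the valuation asserting truth wherever [L] has no falsity. *)
  set (y := fun A => mk (negb (fv (L A))) (fv (L A))).
  assert (y3 : three_valued y).
  { intros A; unfold y; destruct (fv (L A)); discriminate. }
  assert (fv_L_y : forall A, fv (L A) = true -> fv (y A) = true).
  { intros A; unfold y; rewrite fv_mk; auto. }
  assert (y_prefix : le_t_val (Psi FF P y v) y).
  { intros A; destruct (Psi_cases FF P A) as [[B [HB E]]|[_ E]]; rewrite E; [| reflexivity].
    assert (HL : L A = geval L v B) by (rewrite <- E, Lfix; reflexivity).
    assert (fv_B : fv (L A) = true -> fv (geval y v B) = true).
    { rewrite HL; apply geval_fv_mono; auto. }
    rewrite le_t_coords; split; [| unfold y at 1; rewrite fv_mk; exact fv_B].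
    intros Ht; unfold y; rewrite tv_mk.
    destruct (fv (L A)) eqn:EL; [| reflexivity]. exfalso.
    apply (proj1 (neq_II_coords _) (geval_neq_II (inst_consistent Hconv HB) y3 Hv) Ht), fv_B; reflexivity. }
  intros A; specialize (L_least y y_prefix A).
  rewrite le_t_coords in L_least; unfold y in L_least; rewrite tv_mk in L_least.
  apply neq_II_coords; intros Ht Hf; rewrite Hf in L_least; destruct L_least as [L_least _].
  discriminate (L_least Ht).
Qed.

Lemma three_valued_stable_iff P v :
  conventional_program P -> three_valued_stable P v <-> three_valued v /\ PsiF' P v = v.
Proof.
  intros Hconv; destruct (PsiF'_least_prefix P v) as [Lfix L_least].
  unfold three_valued_stable, is_least_fix_in; rewrite (Phi_red_Psi v (proj1 Hconv)).
  split.
  - intros [Hv [Hfix v_least]]; split; [exact Hv |].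
    apply le_t_val_antisym.
    + apply L_least; rewrite Hfix; apply le_t_val_refl.
    + apply v_least; [apply PsiF'_three_valued |]; assumption.
  - intros [Hv HL]; split; [exact Hv | split].
    + transitivity (Psi FF P (PsiF' P v) v); [now rewrite HL | now rewrite Lfix].
    + intros y _ Hy; rewrite <- HL; apply L_least; rewrite Hy; apply le_t_val_refl.
Qed.

Definition mix x x' : Val S := fun A => mk (tv (x A)) (fv (x' A)).

Lemma PsiF'_le_k_mono P v v' : le_k_val v v' -> le_k_val (PsiF' P v) (PsiF' P v').
Proof.
  intros Hvv'.
  destruct (PsiF'_least_prefix P v) as [Lfix L_least], (PsiF'_least_prefix P v') as [L'fix L'_least].
  set (L := PsiF' P v) in *; set (L' := PsiF' P v') in *.
  (* One witness for both coordinates: [L <=t mix L' L] gives [tv L -> tv L'],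
     and [L' <=t mix L' L] gives [fv L -> fv L']. *)
  assert (mix_prefix : forall w, le_k_val v w -> le_k_val w v' ->
                       le_t_val (Psi FF P (mix L' L) w) (mix L' L)).
  { intros w Hvw Hwv' A; destruct (Psi_cases FF P A) as [[B [_ E]]|[_ E]]; rewrite E; [| reflexivity].
    assert (HL : L A = geval L v B) by (rewrite <- E, Lfix; reflexivity).
    assert (HL' : L' A = geval L' v' B) by (rewrite <- E, L'fix; reflexivity).
    unfold mix at 2; rewrite le_t_coords, tv_mk, fv_mk, HL, HL'; split.
    - apply geval_tv_mono; unfold mix; intros A'; rewrite ?tv_mk; auto.
      specialize (Hwv' A'); rewrite le_k_coords in Hwv'; tauto.
    - apply geval_fv_mono; unfold mix; intros A'; rewrite ?fv_mk; auto.
      specialize (Hvw A'); rewrite le_k_coords in Hvw; tauto. }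
  intros A; rewrite le_k_coords; split.
  - specialize (L_least _ (mix_prefix v (le_k_val_refl v) Hvv') A).
    unfold mix in L_least; rewrite le_t_coords, tv_mk in L_least; tauto.
  - specialize (L'_least _ (mix_prefix v' Hvv' (le_k_val_refl v')) A).
    unfold mix in L'_least; rewrite le_t_coords, fv_mk in L'_least; tauto.
Qed.

Lemma well_founded_least_prefix P v :
  conventional_program P -> well_founded P v -> is_least_prefix (@le_k_val S) (PsiF' P) v.
Proof.
  intros Hconv [Hstable v_least].
  destruct (le_k_val_least_prefix (PsiF' P)) as [K [HK K_least]].
  { intros; apply PsiF'_le_k_mono; assumption. }
  apply (three_valued_stable_iff _ Hconv) in Hstable as [Hv Hfix].
  assert (K_le_v : le_k_val K v) by (apply K_least; rewrite Hfix; apply le_k_val_refl).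
  assert (v_le_K : le_k_val v K).
  { apply v_least, (three_valued_stable_iff _ Hconv); split; [exact (three_valued_le_k K_le_v Hv) | exact HK]. }
  rewrite (le_k_val_antisym v_le_K K_le_v); split; assumption.
Qed.

Lemma kripke_kleene_least_prefix P v :
  conventional_program P -> kripke_kleene P v ->
  is_least_prefix (@le_k_val S) (fun x => Psi UU P x x) v.
Proof.
  intros Hconv [Hfix v_least].
  destruct (le_k_val_least_prefix (fun x => Psi UU P x x)) as [K [HK K_least]].
  { intros; apply Psi_le_k_mono; assumption. }
  assert (Hv : three_valued v) by (rewrite <- Hfix; apply Phi_KK_three_valued).
  assert (K_le_v : le_k_val K v).
  { apply K_least; rewrite <- Phi_KK_Psi, Hfix by assumption; apply le_k_val_refl. }
  assert (v_le_K : le_k_val v K).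
  { apply v_least; rewrite Phi_KK_Psi; [exact HK | exact Hconv | exact (three_valued_le_k K_le_v Hv)]. }
  rewrite (le_k_val_antisym v_le_K K_le_v); split; assumption.
Qed.

End FixedModels.

Theorem theorem4 (S : Sig) (P : program S) (v : Val S) :
  conventional_program P ->
  (three_valued_stable P v -> pessimistic_fixed_model P v) /\
  (well_founded P v -> v = Fix_F_U P) /\
  (kripke_kleene P v -> v = Fix_U_U P).
Proof.
  intros Hconv; split; [| split].
  - intros Hstable; apply (three_valued_stable_iff _ Hconv) in Hstable; apply Hstable.
  - intros Hwf; symmetry; apply epsilon_least_fix; [apply le_k_val_antisym |].
    apply least_prefix_least_fix; [apply le_k_val_refl |].
    apply well_founded_least_prefix; assumption.
  - intros Hkk; symmetry; apply epsilon_least_fix; [apply le_k_val_antisym |].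
    apply least_prefix_diag_least_fix with (f := Psi UU P).
    + exact (@le_k_val_refl S).
    + exact (@le_k_val_antisym S).
    + exact (@le_k_val_trans S).
    + exact (@Psi_le_k_mono S UU P).
    + exact (PsiU'_least_prefix P).
    + apply kripke_kleene_least_prefix; assumption.
Qed.
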